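(* Let $L\subset\mathfrak{sl}_2(\mathbb{C}[\lambda])$ be a Lie subalgebra of finite codimension. Then the associative algebra $\mathcal{I}(L)$ is commutative and is isomorphic to the field $\mathbb{C}(\lambda)$ of rational functions in $\lambda$.
   Context: $\mathfrak{sl}_2(\mathbb{C}[\lambda])=\mathfrak{sl}_2(\mathbb{C})\otimes_{\mathbb{C}}\mathbb{C}[\lambda]$ with bracket $[y_1\otimes f_1,y_2\otimes f_2]=[y_1,y_2]\otimes f_1f_2$. For a Lie algebra $\mathfrak{L}$ over $\mathbb{C}$, an admissible pair is $(h,\mathfrak{h})$ with $\mathfrak{h}\subset\mathfrak{L}$ a Lie subalgebra of finite codimension and $h\colon\mathfrak{h}\to\mathfrak{L}$ linear with $h([p_1,p_2])=[h(p_1),p_2]=[p_1,h(p_2)]$ for all $p_1,p_2\in\mathfrak{h}$. Two admissible pairs $(h,\mathfrak{h}),(\tilde h,\tilde{\mathfrak{h}})$ are equivalent if $h$ and $\tilde h$ agree on some subalgebra of finite codimension contained in $\mathfrak{h}\cap\tilde{\mathfrak{h}}$. $\mathcal{I}(\mathfrak{L})$ is the set of equivalence classes, an associative algebra with $c[(h,\mathfrak{h})]=[(ch,\mathfrak{h})]$, $[(h_1,\mathfrak{h}_1)]+[(h_2,\mathfrak{h}_2)]=[(h_1+h_2,\mathfrak{h}_1\cap\mathfrak{h}_2)]$, and $[(h_1,\mathfrak{h}_1)]\cdot[(h_2,\mathfrak{h}_2)]=[(h_1\circ h_2,\hat{\mathfrak{h}})]$ with $\hat{\mathfrak{h}}=\{w\in\mathfrak{h}_1\cap\mathfrak{h}_2: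 h_2(w)\in\mathfrak{h}_1\}$. *)

From HB Require Import structures.
From mathcomp Require Import all_boot all_order all_algebra.
From mathcomp Require Import fraction.
From mathcomp Require Import reals.
From mathcomp.real_closed Require Import complex.
Set Implicit Arguments. Unset Strict Implicit. Unset Printing Implicit Defensive.
Import Order.TTheory GRing.Theory Num.Theory.
Local Open Scope ring_scope.

Definition Cx (R : realType) : fieldType := R[i].

(* sl_2(C[lambda]) is realised as the traceless 2x2 matrices over C[lambda];
   this is the standard identification sl_2(C) (x)_C C[lambda] = sl_2(C[lambda]),
   with bracket [y1 (x) f1, y2 (x) f2] = [y1,y2] (x) f1 f2 = commutator. *)
Definition Mat (R : realType) := 'M[{poly Cx R}]_2.

Section Defs.
Variable R : realType.
Local Notation C := (Cx R).
Local Notation M := (Mat R).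

Definition lbr (x y : M) : M := x *m y - y *m x.
Definition csc (c : C) (x : M) : M := c%:P *: x.

Definition sl2 : M -> Prop := fun x => \tr x = 0.

Definition subspace (A : M -> Prop) : Prop :=
  A 0 /\ (forall x y, A x -> A y -> A (x + y)) /\
  (forall (c : C) x, A x -> A (csc c x)).

Definition lie_subalg (A B : M -> Prop) : Prop :=
  (forall x, A x -> B x) /\ subspace A /\
  (forall x y, A x -> A y -> A (lbr x y)).

Definition fin_codim (A B : M -> Prop) : Prop :=
  exists (n : nat) (v : 'I_n -> M), (forall i, B (v i)) /\
    forall x, B x -> exists c : 'I_n -> C, A (x - \sum_(i < n) csc (c i) (v i)).

Definition fc_subalg (A B : M -> Prop) : Prop := lie_subalg A B /\ fin_codim A B.

(* pairs (h, hh): hh a subset, h a map (relevant only on hh) *)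
Definition pair := ((M -> M) * (M -> Prop))%type.

Definition admissible (L : M -> Prop) (p : pair) : Prop :=
  let: (h, hh) := p in
  fc_subalg hh L /\
  (forall x, hh x -> L (h x)) /\
  (forall (c : C) x y, hh x -> hh y -> h (csc c x + y) = csc c (h x) + h y) /\
  (forall x y, hh x -> hh y ->
     h (lbr x y) = lbr (h x) y /\ h (lbr x y) = lbr x (h y)).

Definition pequiv (L : M -> Prop) (p q : pair) : Prop :=
  exists kk : M -> Prop, fc_subalg kk L /\
    (forall x, kk x -> p.2 x /\ q.2 x) /\
    (forall x, kk x -> p.1 x = q.1 x).

Definition padd (p q : pair) : pair :=
  (fun x => p.1 x + q.1 x, fun x => p.2 x /\ q.2 x).
Definition pscale (c : C) (p : pair) : pair := (fun x => csc c (p.1 x), p.2).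
Definition pmul (p q : pair) : pair :=
  (fun x => p.1 (q.1 x), fun x => p.2 x /\ q.2 x /\ p.2 (q.1 x)).

(* Phi induces an isomorphism of associative C-algebras
   I(L) = {admissible pairs}/pequiv  -->  K *)
Definition induces_alg_iso (L : M -> Prop) (K : fieldType)
    (emb : C -> K) (Phi : pair -> K) : Prop :=
  (* well defined and injective on equivalence classes *)
  (forall p q, admissible L p -> admissible L q -> (pequiv L p q <-> Phi p = Phi q)) /\
  (forall r : K, exists p, admissible L p /\ Phi p = r) /\
  (forall p q, admissible L p -> admissible L q -> Phi (padd p q) = Phi p + Phi q) /\
  (forall (c : C) p, admissible L p -> Phi (pscale c p) = emb c * Phi p) /\
  (forall p q, admissible L p -> admissible L q -> Phi (pmul p q) = Phi p * Phi q).

Definition cemb (c : C) : {fraction {poly C}} := FracField.tofrac (c%:P).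

End Defs.

From HB Require Import structures.
From mathcomp Require Import all_boot all_order all_algebra.
From mathcomp Require Import fraction generic_quotient reals.
From mathcomp.real_closed Require Import complex.
From Stdlib Require Import ClassicalEpsilon.
Set Implicit Arguments. Unset Strict Implicit. Unset Printing Implicit Defensive.
Import Order.TTheory GRing.Theory Num.Theory.
Local Open Scope ring_scope.

(* Embed sl_2(C[lambda]) entrywise into the traceless 2x2 matrices over
   C(lambda).  A subspace of finite codimension contains a nonzero multiple
   a E_ij of each off-diagonal matrix unit: lambda^N E_ij cannot be corrected
   by a finite-dimensional complement once N exceeds its degrees.  For an
   admissible (h, hh) and e = a E_01 in hh, [h e, e] = h [e, e] = [e, h e]
   forces h e to commute with e, so the traceless h e is a C(lambda)-multiple
   F e; comparing [h e, f] = [e, h f] for f = b E_10 shows that the same F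
   works for f.  For any x in hh, h x - F x is then traceless and commutes
   with E_01 and E_10, hence vanishes.  Thus every admissible pair acts as
   multiplication by a rational function F, which yields an injective algebra
   map from I(L) to C(lambda); it is onto because n / d is realised by
   x |-> n (x / d) on the elements of L whose entries are divisible by d. *)

Section MatrixBracket.
Variables (K : comNzRingType) (n : nat).
Implicit Types (A B : 'M[K]_n) (i j k l : 'I_n).

Definition mxbr A B := A *m B - B *m A.

Lemma mxbrC A B : mxbr A B = - mxbr B A.
Proof. by rewrite /mxbr opprB. Qed.

Lemma mxbrZl c A B : mxbr (c *: A) B = c *: mxbr A B.
Proof. by rewrite /mxbr scalerBr -scalemxAl -scalemxAr. Qed.

Lemma mxbrZr c A B : mxbr A (c *: B) = c *: mxbr A B.
Proof. by rewrite /mxbr scalerBr -scalemxAl -scalemxAr. Qed.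

Lemma mxbrBl A B A' : mxbr (A - A') B = mxbr A B - mxbr A' B.
Proof.
rewrite /mxbr mulmxBl mulmxBr !opprB -!addrA; congr (_ + _).
by rewrite addrCA [RHS]addrCA; congr (_ + _); exact: addrC.
Qed.

Lemma mulmx_deltaE A i j k l : (A *m delta_mx i j) k l = A k i * (l == j)%:R.
Proof.
rewrite mxE (bigD1 i) //= big1 => [|m /negbTE mi]; rewrite mxE ?mi ?mulr0 //.
by rewrite eqxx addr0.
Qed.

Lemma mul_delta_mxE A i j k l : (delta_mx i j *m A) k l = (k == i)%:R * A j l.
Proof.
rewrite mxE (bigD1 j) //= big1 => [|m /negbTE mj]; rewrite mxE ?mj ?andbF ?mul0r //.
by rewrite eqxx andbT addr0.
Qed.

Lemma mxbr_deltaE A i j k l :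
  mxbr A (delta_mx i j) k l = A k i * (l == j)%:R - (k == i)%:R * A j l.
Proof. by rewrite -mulmx_deltaE -mul_delta_mxE !mxE. Qed.

End MatrixBracket.

Lemma ord2P (i : 'I_2) : i = 0 \/ i = 1.
Proof. by case: i => [[|[|//]] ?]; [left|right]; apply: val_inj. Qed.

Lemma ord2_pair (i j k : 'I_2) : i != j -> k = i \/ k = j.
Proof.
move=> ij; have [->|->] := ord2P k; have [ei|ei] := ord2P i; have [ej|ej] := ord2P j;
  subst; by [left|right|rewrite eqxx in ij].
Qed.

Lemma mxtrace2 (K : comNzRingType) (A : 'M[K]_2) i j : i != j -> \tr A = A i i + A j j.
Proof.
move=> ij; rewrite /mxtrace (bigD1 i) //= (bigD1 j) 1?eq_sym //= big1 ?addr0 //.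
move=> k /andP[ki kj]; have [] := ord2_pair k ij; move/eqP.
  by rewrite (negbTE ki).
by rewrite (negbTE kj).
Qed.

Section TracelessCentralizer.
Variable K : fieldType.
Hypothesis two_neq0 : 2%:R != 0 :> K.
Implicit Types A X : 'M[K]_2.

Lemma mxbr_symm_eq0 A B : mxbr A B = mxbr B A -> mxbr A B = 0.
Proof.
rewrite [mxbr B A]mxbrC => /eqP; rewrite -subr_eq0 opprK -mulr2n -scaler_nat.
by rewrite scaler_eq0 (negbTE two_neq0) => /eqP.
Qed.

Lemma traceless_centralizer_delta i j X : i != j -> \tr X = 0 ->
  mxbr X (delta_mx i j) = 0 -> X = X i j *: delta_mx i j.
Proof.
move=> ij trX /matrixP XE.
have := XE j j; have := XE i j; rewrite !mxbr_deltaE !mxE !eqxx eq_sym (negbTE ij).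
rewrite !mulr1 mul1r mul0r subr0 => /eqP; rewrite subr_eq0 => /eqP Xii Xji.
have /eqP : X j j *+ 2 = 0 by rewrite mulr2n -{1}Xii -(mxtrace2 _ ij).
rewrite -mulr_natr mulf_eq0 (negbTE two_neq0) orbF => /eqP Xjj.
apply/matrixP => k l; rewrite !mxE.
have [->|->] := ord2_pair k ij; have [->|->] := ord2_pair l ij;
  by rewrite ?eqxx ?(negbTE ij) 1?eq_sym ?(negbTE ij) /= ?mulr1 ?mulr0 ?Xii.
Qed.

Lemma mxbr_delta_neq0 i j : i != j -> mxbr (delta_mx i j) (delta_mx j i) != 0 :> 'M[K]_2.
Proof.
move=> ij; apply/eqP => /matrixP/(_ i i); rewrite mxbr_deltaE !mxE !eqxx (negbTE ij).
by move/eqP; rewrite mulr1 mul0r subr0 oner_eq0.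
Qed.

Lemma traceless_bicentralizer_eq0 i j X : i != j -> \tr X = 0 ->
  mxbr X (delta_mx i j) = 0 -> mxbr X (delta_mx j i) = 0 -> X = 0.
Proof.
move=> ij trX Xij; rewrite (traceless_centralizer_delta ij trX Xij) mxbrZl => /eqP.
by rewrite scaler_eq0 (negbTE (mxbr_delta_neq0 ij)) orbF => /eqP ->; rewrite scale0r.
Qed.

End TracelessCentralizer.

Section FiniteCodimension.
Variable R : realType.
Local Notation C := (Cx R).
Local Notation M := (Mat R).
Implicit Types (A B D : M -> Prop) (g : M -> M).

Lemma csc1 (x : M) : csc 1 x = x.
Proof. by rewrite /csc polyC1 scale1r. Qed.

Lemma csc0 (x : M) : csc 0 x = 0.
Proof. by rewrite /csc polyC0 scale0r. Qed.

Lemma cscA (c d : C) (x : M) : csc c (csc d x) = csc (c * d) x.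
Proof. by rewrite /csc scalerA polyCM. Qed.

Lemma cscDl (c d : C) (x : M) : csc (c + d) x = csc c x + csc d x.
Proof. by rewrite /csc polyCD scalerDl. Qed.

Lemma cscDr (c : C) (x y : M) : csc c (x + y) = csc c x + csc c y.
Proof. by rewrite /csc scalerDr. Qed.

Lemma cscN (c : C) (x : M) : csc (- c) x = - csc c x.
Proof. by rewrite /csc polyCN scaleNr. Qed.

Definition clinear_on D g :=
  forall (c : C) x y, D x -> D y -> g (csc c x + y) = csc c (g x) + g y.

Definition fin_span_mod A B := exists n (v : 'I_n -> M),
  forall x, B x -> exists c : 'I_n -> C, A (x - \sum_(i < n) csc (c i) (v i)).

Lemma fin_codim_span_mod A B : fin_codim A B -> fin_span_mod A B.
Proof. by case=> n [v [_ Hv]]; exists n, v. Qed.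

Lemma fin_codimS A A' B :
  (forall x, A x -> A' x) -> fin_codim A B -> fin_codim A' B.
Proof.
move=> AA' [n [v [vB Hv]]]; exists n, v; split => // x /Hv [c Ac].
by exists c; exact: AA'.
Qed.

Lemma fin_codim_trans A D B :
  fin_codim A D -> fin_codim D B -> (forall x, D x -> B x) -> fin_codim A B.
Proof.
move=> [n [v [vD Hv]]] [m [u [uB Hu]]] DB.
pose w k := match split k with inl i => u i | inr j => v j end.
exists (m + n), w; split=> [k|x /Hu [d /Hv [c Ac]]]; rewrite /w.
  by case: (split k) => [i|j]; [exact: uB | exact: DB (vD j)].
exists (fun k => match split k with inl i => d i | inr j => c j end).
have Sl i : split (lshift n i) = inl i := unsplitK (inl i).
have Sr j : split (rshift m j) = inr j := unsplitK (inr j).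
rewrite big_split_ord /= (eq_bigr (fun i => csc (d i) (u i))) => [|i _]; last by rewrite Sl.
rewrite (eq_bigr (fun j => csc (c j) (v j))) => [|j _]; last by rewrite Sr.
by rewrite opprD addrA.
Qed.

Section LinearOn.
Variables (D : M -> Prop) (g : M -> M).
Hypotheses (sD : subspace D) (gl : clinear_on D g).

Lemma clinear_on0 : g 0 = 0.
Proof.
have [D0 _] := sD; have := gl 1 D0 D0; rewrite !csc1 addr0 => /esym/eqP.
by rewrite -subr_eq0 addrK => /eqP.
Qed.

Lemma clinear_onD x y : D x -> D y -> g (x + y) = g x + g y.
Proof. by move=> Dx Dy; have := gl 1 Dx Dy; rewrite !csc1. Qed.

Lemma clinear_onZ (c : C) x : D x -> g (csc c x) = csc c (g x).
Proof.
by have [D0 _] := sD; move=> Dx; have := gl c Dx D0; rewrite !addr0 clinear_on0 addr0.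
Qed.

Lemma subspace_preim A : subspace A -> subspace (fun x => D x /\ A (g x)).
Proof.
have [D0 [DD DZ]] := sD; move=> [A0 [AD AZ]].
split; first by rewrite clinear_on0.
split=> [x y [Dx Ax] [Dy Ay]|c x [Dx Ax]].
  by split; [exact: DD | rewrite clinear_onD //; exact: AD].
by split; [exact: DZ | rewrite clinear_onZ //; exact: AZ].
Qed.

End LinearOn.

Lemma subspace_add_line A (w : M) :
  subspace A -> subspace (fun y => exists a c, A a /\ y = a + csc c w).
Proof.
move=> [A0 [AD AZ]]; split; first by exists 0, 0; rewrite csc0 addr0.
split=> [x y [a [c [Aa ->]]] [a' [c' [Aa' ->]]]|k x [a [c [Aa ->]]]].
  by exists (a + a'), (c + c'); rewrite cscDl addrACA; split=> //; exact: AD.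
by exists (csc k a), (k * c); rewrite cscDr cscA; split=> //; exact: AZ.
Qed.

Lemma fin_codim_preim_line D A g (w : M) : subspace D -> subspace A -> clinear_on D g ->
  (forall x, D x -> exists a c, A a /\ g x = a + csc c w) ->
  fin_codim (fun x => D x /\ A (g x)) D.
Proof.
move=> [D0 [DD DZ]] [A0 [AD AZ]] gl Hw.
(* Either g maps D into A, or any x0 with g x0 outside A spans D modulo the preimage. *)
case: (classic (exists x0, D x0 /\ ~ A (g x0))) => [[x0 [Dx0 nAx0]]|allA]; last first.
  exists 0%N, (fun _ => 0); split=> [[]//|x Dx]; exists (fun _ => 0).
  by rewrite big_ord0 subr0; split=> //; apply: NNPP => nAx; apply: allA; exists x.
have [a0 [c0 [Aa0 gx0]]] := Hw x0 Dx0.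
have c0_neq0 : c0 != 0 by apply/eqP => c00; apply: nAx0; rewrite gx0 c00 csc0 addr0.
exists 1%N, (fun _ => x0); split=> // y Dy; have [a [c [Aa gy]]] := Hw y Dy.
exists (fun _ => c / c0); rewrite big_ord1.
have -> : y - csc (c / c0) x0 = csc (- (c / c0)) x0 + y by rewrite cscN addrC.
split; first by apply: DD => //; exact: DZ.
rewrite gl // gx0 gy cscDr cscA mulNr divfK // !cscN addrACA addNr addr0 -cscN.
by apply: AD => //; exact: AZ.
Qed.

Lemma fin_codim_preim D A B g : subspace D -> clinear_on D g -> subspace A ->
  fin_span_mod A B -> (forall x, D x -> B (g x)) ->
  fin_codim (fun x => D x /\ A (g x)) D.
Proof.
move=> sD gl sA [n [v Hv]] gB; elim: n A v sA Hv => [|n IH] A v sA Hv.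
  exists 0%N, (fun _ => 0); split=> [[]//|x Dx]; exists (fun _ => 0).
  by rewrite big_ord0 subr0; split=> //; have [c] := Hv _ (gB x Dx); rewrite big_ord0 subr0.
pose w := v ord_max; pose A' y := exists a c, A a /\ y = a + csc c w.
have sA' : subspace A' := subspace_add_line w sA.
have fD' : fin_codim (fun x => D x /\ A' (g x)) D.
  apply: (IH A' (fun i => v (widen_ord (leqnSn n) i)) sA') => x /Hv [c].
  rewrite big_ord_recr /= => Ac; exists (fun i => c (widen_ord (leqnSn n) i)).
  eexists; exists (c ord_max); split; first exact: Ac.
  by rewrite opprD addrA subrK.
apply: (fin_codim_trans _ fD') => [|x []//].
apply: (@fin_codimS (fun x => (D x /\ A' (g x)) /\ A (g x))) => [x [[]]//|].
have sD' := subspace_preim sD gl sA'.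
apply: (fin_codim_preim_line (w := w) sD' sA) => [c x y [Dx _] [Dy _]|x []//].
exact: gl.
Qed.

Lemma fc_subalg_preim L D A B g : fc_subalg D L -> subspace A -> fin_span_mod A B ->
  (forall x, D x -> B (g x)) -> clinear_on D g ->
  (forall x y, D x -> D y -> A (g x) -> A (g y) -> A (g (lbr x y))) ->
  fc_subalg (fun x => D x /\ A (g x)) L.
Proof.
move=> [[DL [sD Dbr]] fD] sA AB gB gl gbr.
split; last exact: fin_codim_trans (fin_codim_preim sD gl sA AB gB) fD DL.
split; first by move=> x [/DL].
split; first exact: subspace_preim.
by move=> x y [Dx Ax] [Dy Ay]; split; [exact: Dbr | exact: gbr].
Qed.

Lemma fin_codim_sl2_delta kk (i j : 'I_2) : i != j -> subspace kk ->
  fin_codim kk (@sl2 R) -> exists a, a != 0 /\ kk (a *: delta_mx i j).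
Proof.
move=> ij skk /fin_codim_span_mod kkS.
pose D (x : M) := exists a, x = a *: delta_mx i j.
have sD : subspace D.
  split; first by exists 0; rewrite scale0r.
  split=> [x y [a ->] [b ->]|c x [a ->]]; first by exists (a + b); rewrite scalerDl.
  by exists (c%:P * a); rewrite /csc scalerA.
have Dsl2 x : D x -> sl2 x.
  move=> [a ->]; rewrite /sl2 mxtraceZ (mxtrace2 _ ij) !mxE !eqxx (negbTE ij).
  by rewrite eq_sym (negbTE ij) addr0 mulr0.
have [m [u [uD Hu]]] := fin_codim_preim sD (fun c x y _ _ => erefl) skk kkS Dsl2.
(* The lambda^N-coefficient of the (i, j) entry survives the correction by the u k. *)
pose N := (\max_(k < m) size (u k i j))%N.
have [c [[a Ea] kka]] := Hu ('X^N *: delta_mx i j) (ex_intro _ _ erefl).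
exists a; split; last by rewrite -Ea.
have /(congr1 (fun x : M => (x i j)`_N)) := Ea.
rewrite !mxE !eqxx !mulr1 summxE coefB coefXn eqxx coef_sum big1 => [|k _].
  by rewrite subr0 => aN; apply/eqP => a0; move: aN; rewrite a0 coef0; exact/eqP/oner_neq0.
rewrite /csc mxE coefCM nth_default ?mulr0 //.
by rewrite /N (bigD1 k) //= leq_maxl.
Qed.

End FiniteCodimension.

Section FractionMatrices.
Variable R : realType.
Local Notation C := (Cx R).
Local Notation M := (Mat R).
Local Notation K := {fraction {poly C}}.
Local Notation tofrac := (@FracField.tofrac {poly C}).

Definition fracmx (x : M) : 'M[K]_2 := map_mx tofrac x.

Lemma fracmx_inj : injective fracmx.
Proof.
move=> x y /matrixP E; apply/matrixP => i j; apply/eqP.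
by rewrite -tofrac_eq; have := E i j; rewrite !mxE => ->.
Qed.

Lemma fracmxD x y : fracmx (x + y) = fracmx x + fracmx y.
Proof. exact: map_mxD. Qed.

Lemma fracmxZ (p : {poly C}) x : fracmx (p *: x) = tofrac p *: fracmx x.
Proof. exact: map_mxZ. Qed.

Lemma fracmx_delta (p : {poly C}) i j :
  fracmx (p *: delta_mx i j) = tofrac p *: delta_mx i j.
Proof. by rewrite fracmxZ /fracmx map_delta_mx. Qed.

Lemma fracmx_lbr x y : fracmx (lbr x y) = mxbr (fracmx x) (fracmx y).
Proof. by rewrite /fracmx /lbr /mxbr map_mxB !map_mxM. Qed.

Lemma fracmx_sl2 x : sl2 x -> \tr (fracmx x) = 0.
Proof. by rewrite /fracmx /sl2 trace_map_mx => ->; rewrite rmorph0. Qed.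

Lemma sl2_fracmx x : \tr (fracmx x) = 0 -> sl2 x.
Proof. by rewrite /fracmx /sl2 trace_map_mx => /eqP; rewrite tofrac_eq0 => /eqP. Qed.

Lemma frac_two_neq0 : 2%:R != 0 :> K.
Proof. by rewrite -tofrac1 -tofracMn tofrac_eq0 -polyCMn polyC_eq0 pnatr_eq0. Qed.

Lemma mxbr_fracmx_delta_eq0 (X : 'M[K]_2) (p : {poly C}) i j : p != 0 ->
  mxbr X (fracmx (p *: delta_mx i j)) = 0 -> mxbr X (delta_mx i j) = 0.
Proof.
move=> p0; rewrite fracmx_delta mxbrZr => /eqP.
by rewrite scaler_eq0 tofrac_eq0 (negbTE p0) => /eqP.
Qed.

End FractionMatrices.

Arguments frac_two_neq0 {R}.

Section CentroidScalar.
Variable R : realType.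
Local Notation C := (Cx R).
Local Notation M := (Mat R).
Local Notation K := {fraction {poly C}}.
Local Notation tofrac := (@FracField.tofrac {poly C}).
Variables (hh : M -> Prop) (h : M -> M).
Hypotheses (hh_sl2 : forall x, hh x -> sl2 x) (h_sl2 : forall x, hh x -> sl2 (h x)).
Hypothesis h_centroid : forall x y, hh x -> hh y ->
  h (lbr x y) = lbr (h x) y /\ h (lbr x y) = lbr x (h y).

Lemma centroid_mxbr x y : hh x -> hh y ->
  mxbr (fracmx (h x)) (fracmx y) = mxbr (fracmx x) (fracmx (h y)).
Proof. by move=> hx hy; rewrite -!fracmx_lbr; case: (h_centroid hx hy) => <- <-. Qed.

Lemma centroid_mxbr_eq0 (F : K) x e : hh x -> hh e -> fracmx (h e) = F *: fracmx e ->
  mxbr (fracmx (h x) - F *: fracmx x) (fracmx e) = 0.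
Proof. by move=> hx he hFe; rewrite mxbrBl mxbrZl centroid_mxbr // hFe mxbrZr subrr. Qed.

Lemma centroid_delta (p : {poly C}) i j : i != j -> p != 0 -> hh (p *: delta_mx i j) ->
  exists F : K, fracmx (h (p *: delta_mx i j)) = F *: fracmx (p *: delta_mx i j).
Proof.
move=> ij p0 he; set e := p *: delta_mx i j.
have := mxbr_symm_eq0 frac_two_neq0 (centroid_mxbr he he).
move=> /(mxbr_fracmx_delta_eq0 p0) comm; exists (fracmx (h e) i j / tofrac p).
rewrite {1}(traceless_centralizer_delta frac_two_neq0 ij _ comm); last exact/fracmx_sl2/h_sl2.
by rewrite fracmx_delta scalerA divfK // tofrac_eq0.
Qed.

Lemma centroid_scalar : (exists a, a != 0 /\ hh (a *: delta_mx 0 1)) ->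
  (exists b, b != 0 /\ hh (b *: delta_mx 1 0)) ->
  exists F : K, forall x, hh x -> fracmx (h x) = F *: fracmx x.
Proof.
move=> [a [a0 he]] [b [b0 hf]].
have [F hFe] := centroid_delta (isT : (0 : 'I_2) != 1) a0 he.
have [G hGf] := centroid_delta (isT : (1 : 'I_2) != 0) b0 hf.
have GF : G = F; last rewrite {G}GF in hGf.
  have /eqP := centroid_mxbr he hf.
  rewrite hFe hGf mxbrZl mxbrZr -subr_eq0 -scalerBl scaler_eq0 subr_eq0 => /orP[/eqP//|].
  rewrite !fracmx_delta mxbrZl mxbrZr !scaler_eq0 !tofrac_eq0 (negbTE a0) (negbTE b0).
  by rewrite (negbTE (mxbr_delta_neq0 _ _)).
exists F => x hx; apply/eqP; rewrite -subr_eq0; apply/eqP.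
apply: (traceless_bicentralizer_eq0 frac_two_neq0 (isT : (0 : 'I_2) != 1)).
- by rewrite raddfB /= mxtraceZ (fracmx_sl2 (h_sl2 hx)) (fracmx_sl2 (hh_sl2 hx)) mulr0 subr0.
- exact: mxbr_fracmx_delta_eq0 a0 (centroid_mxbr_eq0 hx he hFe).
- exact: mxbr_fracmx_delta_eq0 b0 (centroid_mxbr_eq0 hx hf hGf).
Qed.

End CentroidScalar.

Section ScalarActions.
Variable R : realType.
Local Notation M := (Mat R).
Local Notation K := {fraction {poly (Cx R)}}.
Variables (D : M -> Prop) (g : M -> M) (F : K).
Hypothesis g_scalar : forall x, D x -> fracmx (g x) = F *: fracmx x.

Lemma scalar_clinear_on : subspace D -> clinear_on D g.
Proof.
move=> [_ [DD DZ]] c x y Dx Dy; apply: fracmx_inj.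
rewrite g_scalar; last by apply: DD => //; exact: DZ.
by rewrite /csc !fracmxD !fracmxZ !g_scalar // scalerDr !scalerA mulrC.
Qed.

Lemma scalar_centroid : (forall x y, D x -> D y -> D (lbr x y)) ->
  forall x y, D x -> D y -> g (lbr x y) = lbr (g x) y /\ g (lbr x y) = lbr x (g y).
Proof.
move=> Dbr x y Dx Dy; have Dxy := Dbr x y Dx Dy.
by split; apply: fracmx_inj; rewrite !fracmx_lbr !g_scalar // fracmx_lbr (mxbrZl, mxbrZr).
Qed.

End ScalarActions.

Lemma tofrac_ratio (T : idomainType) (r : {fraction T}) :
  exists n d, d != 0 /\ r = FracField.tofrac n / FracField.tofrac d.
Proof.
elim/quotW: r => r; exists r.1, r.2; split; first exact: denom_ratioP.
have d0 : FracField.tofrac r.2 != 0 by rewrite tofrac_eq0 denom_ratioP.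
apply: (mulIf d0); rewrite divfK //; unlock FracField.tofrac.
rewrite -[X in X = _]FracField.pi_mul /FracField.mulf; apply/eqmodP => /=.
rewrite FracField.equivfE /= !numden_Ratio ?mulf_neq0 ?oner_neq0 ?denom_ratioP //.
by rewrite !mulr1 mulrC.
Qed.

Section DivisibleMatrices.
Variable R : realType.
Local Notation C := (Cx R).
Local Notation M := (Mat R).
Variable d : {poly C}.
Hypothesis d_neq0 : d != 0.

Definition dvdmx (x : M) := forall i j, d %| x i j.

Definition divmx (x : M) : M := map_mx (fun e => e %/ d) x.

Lemma divmxK x : dvdmx x -> d *: divmx x = x.
Proof. by move=> dx; apply/matrixP => i j; rewrite !mxE mulrC divpK. Qed.

Lemma dvdmx_lbr x y : dvdmx x -> dvdmx (lbr x y).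
Proof.
move=> dx i j; rewrite /lbr !mxE; apply: dvdp_sub; apply: (big_ind (fun p => d %| p)) => //.
- by move=> p q; exact: dvdp_add.
- by move=> k _; exact: dvdp_mulr.
- by move=> p q; exact: dvdp_add.
- by move=> k _; exact: dvdp_mull.
Qed.

Lemma subspace_dvdmx : subspace dvdmx.
Proof.
split; first by move=> i j; rewrite mxE dvdp0.
split=> [x y dx dy|c x dx] i j; rewrite /csc mxE; [exact: dvdp_add | exact: dvdp_mull].
Qed.

Lemma subspace_dvd_entry i j : subspace (fun x : M => d %| x i j).
Proof.
split; first by rewrite mxE dvdp0.
by split=> [x y|c x]; rewrite /csc mxE; [exact: dvdp_add | exact: dvdp_mull].
Qed.

Lemma dvd_entry_span i j : fin_span_mod (fun x : M => d %| x i j) (fun _ => True).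
Proof.
exists (size d), (fun k => 'X^k *: delta_mx i j) => x _.
exists (fun k => (x i j %% d)`_k); rewrite mxE mxE summxE.
have -> : \sum_(k < size d) csc ((x i j %% d)`_k) ('X^k *: delta_mx i j) i j = x i j %% d.
  have Hs : (size (x i j %% d)%R <= size d)%N by apply: ltnW; rewrite ltn_modp.
  rewrite -[RHS](_ : \poly_(k < size d) (x i j %% d)`_k = _); last first.
    apply/polyP => k; rewrite coef_poly; case: ltnP => // hk.
    by rewrite nth_default // (leq_trans Hs hk).
  rewrite poly_def; apply: eq_bigr => k _.
  by rewrite /csc !mxE !eqxx mulr1 mul_polyC.
by rewrite {1}(divp_eq (x i j) d) addrK dvdp_mulIr.
Qed.

Lemma fin_codim_dvdmx D : subspace D -> fin_codim (fun x => D x /\ dvdmx x) D.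
Proof.
have meet_entry (D' : M -> Prop) i j : subspace D' ->
    fin_codim (fun x => D' x /\ d %| x i j) D' /\ subspace (fun x => D' x /\ d %| x i j).
  move=> sD'; have idl : clinear_on D' id by [].
  have sE := subspace_dvd_entry i j.
  split; last exact: (subspace_preim sD' idl sE).
  exact: fin_codim_preim sD' idl sE (dvd_entry_span i j) (fun _ _ => I).
move=> sD; have [f1 s1] := meet_entry D 0 0 sD; have [f2 s2] := meet_entry _ 0 1 s1.
have [f3 s3] := meet_entry _ 1 0 s2; have [f4 _] := meet_entry _ 1 1 s3.
apply: (fin_codimS _ (fin_codim_trans f4 (fin_codim_trans f3 (fin_codim_trans f2 f1 _) _) _)).
- move=> x [[[[Dx d00] d01] d10] d11]; split=> // i j.
  by have [->|->] := ord2P i; have [->|->] := ord2P j.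
- by move=> x [].
- by move=> x [[]].
- by move=> x [[[]]].
Qed.

End DivisibleMatrices.

Section FracOf.
Variable R : realType.
Local Notation C := (Cx R).
Local Notation K := {fraction {poly C}}.
Implicit Types p : pair R.

Definition acts_as_mul (F : K) p := forall x, p.2 x -> fracmx (p.1 x) = F *: fracmx x.

Lemma acts_as_mul_uniq p F G : (exists2 x, p.2 x & x != 0) ->
  acts_as_mul F p -> acts_as_mul G p -> F = G.
Proof.
move=> [x px x0] hF hG; have /eqP := hF x px.
rewrite hG // -subr_eq0 -scalerBl scaler_eq0 subr_eq0 => /orP[/eqP-> //|/eqP fx0].
by move: x0; rewrite -(inj_eq (@fracmx_inj R)) fx0 /fracmx map_mx0 eqxx.
Qed.

Definition frac_of p : K := epsilon (inhabits 0) (fun F => acts_as_mul F p).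

Lemma frac_of_eq p F : (exists2 x, p.2 x & x != 0) -> acts_as_mul F p -> frac_of p = F.
Proof.
move=> nz hF; have hP := epsilon_spec (inhabits 0) (acts_as_mul^~ p) (ex_intro _ F hF).
exact: acts_as_mul_uniq nz hP hF.
Qed.

End FracOf.

Section AdmissiblePairs.
Variable R : realType.
Local Notation C := (Cx R).
Local Notation M := (Mat R).
Local Notation K := {fraction {poly C}}.
Local Notation tofrac := (@FracField.tofrac {poly C}).
Variable L : M -> Prop.
Hypotheses (L_subalg : lie_subalg L (@sl2 R)) (L_codim : fin_codim L (@sl2 R)).
Implicit Types (kk : M -> Prop) (p q : pair R).

Lemma admissibleP p : admissible L p ->
  [/\ fc_subalg p.2 L, (forall x, p.2 x -> L (p.1 x)), clinear_on p.2 p.1 &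
   forall x y, p.2 x -> p.2 y ->
     p.1 (lbr x y) = lbr (p.1 x) y /\ p.1 (lbr x y) = lbr x (p.1 y)].
Proof. by case: p => h hh [? [? [? ?]]]. Qed.

Lemma fc_subalg_subspace kk : fc_subalg kk L -> subspace kk.
Proof. by case=> [[_ []]]. Qed.

Lemma fc_subalg_sl2 kk : fc_subalg kk L -> fin_codim kk (@sl2 R).
Proof. by case=> _ fk; apply: (fin_codim_trans fk L_codim); case: L_subalg. Qed.

Lemma fc_subalg_delta kk (i j : 'I_2) : i != j -> fc_subalg kk L ->
  exists a, a != 0 /\ kk (a *: delta_mx i j).
Proof.
by move=> ij fk; apply: fin_codim_sl2_delta ij (fc_subalg_subspace fk) (fc_subalg_sl2 fk).
Qed.

Lemma fc_subalg_neq0 kk : fc_subalg kk L -> exists2 x, kk x & x != 0.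
Proof.
move=> /(fc_subalg_delta (isT : (0 : 'I_2) != 1)) [a [a0 ka]]; exists (a *: delta_mx 0 1) => //.
apply/eqP => /matrixP/(_ 0 1); rewrite !mxE /= mulr1 => a_eq0.
by rewrite a_eq0 eqxx in a0.
Qed.

Lemma fc_subalgI kk kk' : fc_subalg kk L -> fc_subalg kk' L ->
  fc_subalg (fun x => kk x /\ kk' x) L.
Proof.
move=> fk fk'; have [[_ [_ br']] /fin_codim_span_mod fk'S] := fk'.
apply: (fc_subalg_preim (g := id) fk (fc_subalg_subspace fk') fk'S) => // [x|x y _ _].
  by case: fk => [[kL _] _]; exact: kL.
exact: br'.
Qed.

Lemma fc_subalg_pmul p q D : admissible L p -> admissible L q ->
  fc_subalg D L -> (forall x, D x -> p.2 x /\ q.2 x) ->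
  fc_subalg (fun x => D x /\ p.2 (q.1 x)) L.
Proof.
move=> /admissibleP [fp _ _ _] /admissibleP [_ qL ql qbr] fD Dpq.
have [[_ [_ pbr]] /fin_codim_span_mod fpS] := fp.
apply: (fc_subalg_preim fD (fc_subalg_subspace fp) fpS) => [x /Dpq[_ /qL]//|c x y|x y].
  by move=> /Dpq[_ qx] /Dpq[_ qy]; exact: ql.
move=> /Dpq[_ qx] /Dpq[py qy] pqx _.
by have [-> _] := qbr x y qx qy; exact: pbr.
Qed.

Lemma admissible_acts_as_mul p : admissible L p -> exists F, acts_as_mul F p.
Proof.
move=> /admissibleP [fp pL _ pbr].
have Lsl2 x : L x -> sl2 x by case: L_subalg => LL _; exact: LL.
have ppL x : p.2 x -> L x by case: fp => [[pL' _] _]; exact: pL'.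
have hh_sl2 x (px : p.2 x) : sl2 x := Lsl2 x (ppL x px).
have h_sl2 x (px : p.2 x) : sl2 (p.1 x) := Lsl2 _ (pL x px).
exact: (centroid_scalar hh_sl2 h_sl2 pbr (fc_subalg_delta (isT : (0 : 'I_2) != 1) fp)
                                         (fc_subalg_delta (isT : (1 : 'I_2) != 0) fp)).
Qed.

Lemma frac_ofP p : admissible L p -> acts_as_mul (frac_of p) p.
Proof. by move/admissible_acts_as_mul; exact: epsilon_spec. Qed.

Lemma pequiv_pmulC p q : admissible L p -> admissible L q -> pequiv L (pmul p q) (pmul q p).
Proof.
move=> ap aq; have [fp _ _ _] := admissibleP ap; have [fq _ _ _] := admissibleP aq.
have hp := frac_ofP ap; have hq := frac_ofP aq.
exists (fun x => ((p.2 x /\ q.2 x) /\ p.2 (q.1 x)) /\ q.2 (p.1 x)); split.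
  apply: (fc_subalg_pmul aq ap (fc_subalg_pmul ap aq (fc_subalgI fp fq) _)) => x //.
  by case=> [[]].
split=> x [[[px qx] pqx] qpx] /=; first by do !split.
apply: fracmx_inj; rewrite (hp (q.1 x)) // (hq x) // (hq (p.1 x)) // (hp x) //.
by rewrite !scalerA mulrC.
Qed.

Lemma frac_of_pequiv p q : admissible L p -> admissible L q ->
  pequiv L p q <-> frac_of p = frac_of q.
Proof.
move=> ap aq; have hp := frac_ofP ap; have hq := frac_ofP aq; split.
  move=> [kk [fk [kpq pq]]].
  apply: (@acts_as_mul_uniq _ (p.1, kk)) => [|x kx|x kx] /=; first exact: fc_subalg_neq0.
    exact: hp (proj1 (kpq x kx)).
  by rewrite pq //; exact: hq (proj2 (kpq x kx)).
move=> pq; have [fp _ _ _] := admissibleP ap; have [fq _ _ _] := admissibleP aq.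
exists (fun x => p.2 x /\ q.2 x); split; first exact: fc_subalgI.
by split=> // x [px qx]; apply: fracmx_inj; rewrite hp // hq // pq.
Qed.

Lemma frac_of_padd p q : admissible L p -> admissible L q ->
  frac_of (padd p q) = frac_of p + frac_of q.
Proof.
move=> ap aq; have [fp _ _ _] := admissibleP ap; have [fq _ _ _] := admissibleP aq.
apply: frac_of_eq; first exact: fc_subalg_neq0 (fc_subalgI fp fq).
by move=> x [px qx] /=; rewrite fracmxD !frac_ofP // scalerDl.
Qed.

Lemma frac_of_pscale (c : C) p : admissible L p -> frac_of (pscale c p) = cemb c * frac_of p.
Proof.
move=> ap; have [fp _ _ _] := admissibleP ap.
apply: frac_of_eq => [|x px /=]; first exact: fc_subalg_neq0 fp.
by rewrite /csc fracmxZ frac_ofP // scalerA.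
Qed.

Lemma frac_of_pmul p q : admissible L p -> admissible L q ->
  frac_of (pmul p q) = frac_of p * frac_of q.
Proof.
move=> ap aq; have [fp _ _ _] := admissibleP ap; have [fq _ _ _] := admissibleP aq.
have := fc_subalg_pmul ap aq (fc_subalgI fp fq) (fun _ h => h).
move=> /fc_subalg_neq0 [x [[px qx] pqx] x0].
apply: frac_of_eq => [|y [py [qy pqy]] /=]; first by exists x.
by rewrite !frac_ofP // scalerA.
Qed.

Lemma admissible_scalar D g (F : K) : fc_subalg D L ->
  (forall x, D x -> fracmx (g x) = F *: fracmx x) ->
  admissible L (g, fun x => D x /\ L (g x)) /\ frac_of (g, fun x => D x /\ L (g x)) = F.
Proof.
move=> fD g_scalar; have [[DL [sD Dbr]] _] := fD; have [Lsl2 [sL Lbr]] := L_subalg.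
have gl := scalar_clinear_on g_scalar sD; have gc := scalar_centroid g_scalar Dbr.
have fhh : fc_subalg (fun x => D x /\ L (g x)) L.
  apply: (fc_subalg_preim fD sL (fin_codim_span_mod L_codim)) => // [x Dx|x y Dx Dy Lgx _].
    by apply: sl2_fracmx; rewrite g_scalar // mxtraceZ fracmx_sl2 ?mulr0 //; exact/Lsl2/DL.
  by have [-> _] := gc x y Dx Dy; exact: Lbr (DL y Dy).
split; last by apply: frac_of_eq => [|x [Dx _]]; [exact: fc_subalg_neq0 fhh | exact: g_scalar].
split=> //; split=> [x []//|].
by split=> [c x y [Dx _] [Dy _]|x y [Dx _] [Dy _]]; [exact: gl | exact: gc].
Qed.

Lemma fc_subalg_dvdmx d : d != 0 -> fc_subalg (fun x => L x /\ dvdmx d x) L.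
Proof.
move=> d0; have [LL [sL Lbr]] := L_subalg.
split; last exact: (fin_codim_dvdmx d0 sL).
split; first by move=> x [].
split; first exact: (subspace_preim sL (fun _ _ _ _ _ => erefl) (subspace_dvdmx d)).
by move=> x y [Lx dx] [Ly _]; split; [exact: Lbr | exact: dvdmx_lbr].
Qed.

Lemma frac_of_surj (r : K) : exists p, admissible L p /\ frac_of p = r.
Proof.
have [n [d [d0 ->]]] := tofrac_ratio r.
pose g x := n *: divmx d x.
have := @admissible_scalar _ g (tofrac n / tofrac d) (fc_subalg_dvdmx d0).
case=> [x [_ dx]|ap pr]; last by eexists; split; [exact: ap | exact: pr].
by rewrite fracmxZ -[in RHS](divmxK dx) fracmxZ scalerA divfK // tofrac_eq0.
Qed.

End AdmissiblePairs.

Unset Implicit Arguments.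
Theorem theorem6p9 (R : realType) (L : Mat R -> Prop) :
  lie_subalg L (@sl2 R) -> fin_codim L (@sl2 R) ->
  (* I(L) is commutative *)
  (forall p q, admissible L p -> admissible L q -> pequiv L (pmul p q) (pmul q p)) /\
  (* I(L) is isomorphic, as an associative C-algebra, to C(lambda) *)
  exists Phi : pair R -> {fraction {poly Cx R}},
    induces_alg_iso L (@cemb R) Phi.
Proof.
move=> L_subalg L_codim; split; first exact: (pequiv_pmulC L_subalg L_codim).
exists (@frac_of R); split; first exact: (frac_of_pequiv L_subalg L_codim).
split; first exact: (frac_of_surj L_subalg L_codim).
split; first exact: (frac_of_padd L_subalg L_codim).
split; first exact: (frac_of_pscale L_subalg L_codim).
exact: (frac_of_pmul L_subalg L_codim).
Qed.
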